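(* Let $\varphi$ be a forecasting system and $\omega\in\Omega$ a path. Then $\omega$ is S-random for $\varphi$ if and only if there is no computable non-negative supermartingale $M$ for $\varphi$ that is computably unbounded on $\omega$, i.e. there are no such $M$ and real growth function $\tau$ with $\limsup_{n\to\infty}[M(\omega_{1:n})-\tau(n)]\ge0$.
   Context: Notation: $\mathbb N_0=\{0,1,2,\dots\}$. $\Omega=\{0,1\}^{\mathbb N}$ is the set of paths $\omega=(\omega_1,\omega_2,\dots)$; $\omega_{1:n}=(\omega_1,\dots,\omega_n)$, $\omega_{1:0}=\square$. $\mathbb S=\bigcup_{n\in\mathbb N_0}\{0,1\}^n$ is the set of situations, $sx$ concatenation. $\mathscr I$ is the set of closed intervals $I\subseteq[0,1]$. For $r\in[0,1]$, $f:\{0,1\}\to\mathbb R$: $E_r(f)=rf(1)+(1-r)f(0)$; $\overline E_I(f)=\max_{r\in I}E_r(f)$. A forecasting system is a map $\varphi:\mathbb S\to\mathscr I$. A real process is $F:\mathbb S\to\mathbb R$; $\Delta F(s)$ is $x\mapsto F(sx)-F(s)$. $M$ is a supermartingale for $\varphi$ if $\overline E_{\varphi(s)}(\Delta M(s))\le0$ for all $s$. A test supermartingale for $\varphi$ is a non-negative supermartingale $T$ for $\varphi$ with $T(\square)=1$. Computability: a map from $\mathbb S$ or $\mathbb S\times\mathbb N_0$ (or $\mathbb N_0$) to $\mathbb Q$ is recursive if Turing-computable; a real map $r$ on such a domain is computable if there is a recursive rational $q$ with $|r(d)-q(d,n)|<2^{-n}$ for all $d,n$. A real growth function is a computable, non-decreasing,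 unbounded map $\tau:\mathbb N_0\to[0,\infty)$. $\omega$ is S-random for $\varphi$ if there are no positive, rational-valued, recursive test supermartingale $T$ for $\varphi$ and real growth function $\tau$ with $\limsup_n[T(\omega_{1:n})-\tau(n)]\ge0$. *)

From Stdlib Require Import Reals List.
From Coquelicot Require Import Coquelicot.
Import ListNotations.
Open Scope R_scope.

(* A situation is a finite binary sequence; [s ++ [x]] is the concatenation sx. *)
Definition situation := list bool.

(* A path omega : nat -> bool, where [omega i] is the (i+1)-th outcome
   omega_{i+1}.  [prefix omega n] = omega_{1:n}, and prefix omega 0 = []. *)
Definition prefix (omega : nat -> bool) (n : nat) : situation :=
  map omega (seq 0 n).

Definition interval01 (I : R * R) : Prop :=
  0 <= fst I /\ fst I <= snd I /\ snd I <= 1.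

Definition in_interval (I : R * R) (r : R) : Prop := fst I <= r <= snd I.

Definition forecasting_system (phi : situation -> R * R) : Prop :=
  forall s, interval01 (phi s).

Definition Ex (r : R) (f : bool -> R) : R := r * f true + (1 - r) * f false.

Definition Delta (F : situation -> R) (s : situation) : bool -> R :=
  fun x => F (s ++ [x]) - F s.

(* upper expectation bounded by 0:  max_{r in I} E_r(f) <= 0,
   i.e. E_r(f) <= 0 for every r in I (the max over the compact I is attained). *)
Definition upper_exp_le0 (I : R * R) (f : bool -> R) : Prop :=
  forall r, in_interval I r -> Ex r f <= 0.

Definition supermartingale (phi : situation -> R * R) (M : situation -> R) : Prop :=
  forall s, upper_exp_le0 (phi s) (Delta M s).

Definition test_supermartingale (phi : situation -> R * R) (T : situation -> R) : Prop :=
  supermartingale phi T /\ (forall s, 0 <= T s) /\ T [] = 1.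

Inductive rec_code : Type :=
| rZero : rec_code
| rSucc : rec_code
| rProj : nat -> rec_code
| rComp : rec_code -> list rec_code -> rec_code
| rPrim : rec_code -> rec_code -> rec_code
| rMu   : rec_code -> rec_code.

Inductive eval : rec_code -> list nat -> nat -> Prop :=
| eZero xs : eval rZero xs 0
| eSucc x xs : eval rSucc (x :: xs) (S x)
| eProj i xs : eval (rProj i) xs (nth i xs 0%nat)
| eComp f gs xs ys z :
    Forall2 (fun g y => eval g xs y) gs ys -> eval f ys z -> eval (rComp f gs) xs z
| ePrim0 f g xs z : eval f xs z -> eval (rPrim f g) (0%nat :: xs) z
| ePrimS f g n xs y z :
    eval (rPrim f g) (n :: xs) y -> eval g (n :: y :: xs) z ->
    eval (rPrim f g) (S n :: xs) z
| eMu f xs y :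
    eval f (y :: xs) 0%nat ->
    (forall k, (k < y)%nat -> exists v, eval f (k :: xs) (S v)) ->
    eval (rMu f) xs y.

Definition recursive1 (g : nat -> nat) : Prop :=
  exists p, forall n, eval p [n] (g n).
Definition recursive2 (g : nat -> nat -> nat) : Prop :=
  exists p, forall n m, eval p [n; m] (g n m).

(* Standard bijective binary coding of situations by natural numbers. *)
Fixpoint code (s : situation) : nat :=
  match s with
  | [] => 0%nat
  | b :: t => (2 * code t + (if b then 2 else 1))%nat
  end.

Definition ratQ (a b c : nat) : R := (INR a - INR b) / (INR c + 1).

Definition recursive_rat_S (q : situation -> R) : Prop :=
  exists a b c : nat -> nat, recursive1 a /\ recursive1 b /\ recursive1 c /\
    forall s, q s = ratQ (a (code s)) (b (code s)) (c (code s)).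

Definition recursive_rat_SN (q : situation -> nat -> R) : Prop :=
  exists a b c : nat -> nat -> nat, recursive2 a /\ recursive2 b /\ recursive2 c /\
    forall s n, q s n = ratQ (a (code s) n) (b (code s) n) (c (code s) n).

Definition recursive_rat_NN (q : nat -> nat -> R) : Prop :=
  exists a b c : nat -> nat -> nat, recursive2 a /\ recursive2 b /\ recursive2 c /\
    forall d n, q d n = ratQ (a d n) (b d n) (c d n).

Definition computable_S (r : situation -> R) : Prop :=
  exists q, recursive_rat_SN q /\ forall s n, Rabs (r s - q s n) < / 2 ^ n.

Definition computable_N (r : nat -> R) : Prop :=
  exists q, recursive_rat_NN q /\ forall d n, Rabs (r d - q d n) < / 2 ^ n.

Definition real_growth_function (tau : nat -> R) : Prop :=
  computable_N tau /\ (forall n, 0 <= tau n) /\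
  (forall n m, (n <= m)%nat -> tau n <= tau m) /\
  (forall B, exists n, B < tau n).

Definition limsup_ge0 (F : situation -> R) (tau : nat -> R) (omega : nat -> bool) : Prop :=
  Rbar_le (Finite 0) (LimSup_seq (fun n => F (prefix omega n) - tau n)).

Definition S_random (phi : situation -> R * R) (omega : nat -> bool) : Prop :=
  ~ exists (T : situation -> R) (tau : nat -> R),
      (forall s, 0 < T s) /\ recursive_rat_S T /\ test_supermartingale phi T /\
      real_growth_function tau /\ limsup_ge0 T tau omega.

(** A computable non-negative supermartingale [M] can be traded for a
    rational-valued recursive one.  If [q s n] approximates [M s] within
    [2^-n], put [U s = q s (c + 3) + 1/(c + 1)] with [c] the code of [s].
    The codes strictly increase along every path and the bonus [1/(c + 1)]
    decreases faster than the approximation errors can accumulate, so [U]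
    strictly majorises [M] while each increment of [U] is at most the
    corresponding increment of [M]; hence [U] is again a supermartingale.
    Scaling [U] by a rational [1/(k + 1)] with [U [] <= k + 1] and shifting it
    so that it starts at [1] yields a positive test supermartingale, which
    dominates [M/(k + 1)] and so is unbounded against the growth function
    [tau/(k + 1)].  Conversely, a rational recursive test supermartingale is
    trivially computable and non-negative. *)

From Pilot Require Import Defs.
From Stdlib Require Import Reals List Lia Lra.
From Coquelicot Require Import Coquelicot.
Import ListNotations.
Open Scope R_scope.

Lemma eval_comp2 h p1 p2 xs a b c :
  eval p1 xs a -> eval p2 xs b -> eval h [a; b] c -> eval (rComp h [p1; p2]) xs c.
Proof. intros H1 H2; apply (eComp h [p1; p2] xs [a; b]); repeat constructor; assumption. Qed.

Definition add_code : rec_code := rPrim (rProj 0) (rComp rSucc [rProj 1]).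

Lemma add_code_eval n m : eval add_code [n; m] (n + m)%nat.
Proof.
  induction n as [|n IH].
  - apply ePrim0, (eProj 0 [m]).
  - apply (ePrimS _ _ n [m] (n + m)%nat); [exact IH|].
    apply (eComp rSucc [rProj 1] _ [(n + m)%nat]); [|apply eSucc].
    repeat constructor; exact (eProj 1 [n; (n + m)%nat; m]).
Qed.

Definition mul_code : rec_code := rPrim rZero (rComp add_code [rProj 1; rProj 2]).

Lemma mul_code_eval n m : eval mul_code [n; m] (n * m)%nat.
Proof.
  induction n as [|n IH].
  - apply ePrim0, eZero.
  - apply (ePrimS _ _ n [m] (n * m)%nat); [exact IH|].
    eapply eval_comp2; [exact (eProj 1 [n; (n * m)%nat; m])
                       |exact (eProj 2 [n; (n * m)%nat; m])|].
    replace (S n * m)%nat with (n * m + m)%nat by lia; apply add_code_eval.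
Qed.

Fixpoint const_code (k : nat) : rec_code :=
  match k with O => rZero | S k => rComp rSucc [const_code k] end.

Lemma const_code_eval k xs : eval (const_code k) xs k.
Proof.
  induction k as [|k IH]; simpl.
  - apply eZero.
  - apply (eComp rSucc [const_code k] xs [k]); [repeat constructor; exact IH|apply eSucc].
Qed.

Lemma recursive2_const k : recursive2 (fun _ _ => k).
Proof. exists (const_code k); intros; apply const_code_eval. Qed.

Lemma recursive2_fst : recursive2 (fun n _ => n).
Proof. exists (rProj 0); intros n m; exact (eProj 0 [n; m]). Qed.

Lemma recursive2_comp h f g : recursive2 h -> recursive2 f -> recursive2 g ->
  recursive2 (fun n m => h (f n m) (g n m)).
Proof.
  intros [ph Hh] [pf Hf] [pg Hg]; exists (rComp ph [pf; pg]).
  intros; eapply eval_comp2; eauto.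
Qed.

Lemma recursive2_add f g : recursive2 f -> recursive2 g ->
  recursive2 (fun n m => f n m + g n m)%nat.
Proof.
  apply (recursive2_comp Nat.add); exists add_code; apply add_code_eval.
Qed.

Lemma recursive2_mul f g : recursive2 f -> recursive2 g ->
  recursive2 (fun n m => f n m * g n m)%nat.
Proof.
  apply (recursive2_comp Nat.mul); exists mul_code; apply mul_code_eval.
Qed.

Lemma recursive1_of_recursive2 f : recursive2 f -> recursive1 (fun n => f n 0%nat).
Proof.
  intros [p H]; exists (rComp p [rProj 0; rZero]); intros n.
  eapply eval_comp2; [exact (eProj 0 [n]) | apply eZero | apply H].
Qed.

Lemma recursive2_of_recursive1 f : recursive1 f -> recursive2 (fun n _ => f n).
Proof.
  intros [p H]; exists (rComp p [rProj 0]); intros n m.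
  apply (eComp p [rProj 0] [n; m] [n]); [repeat constructor|apply H].
Qed.

Lemma ratQ_plus a1 b1 c1 a2 b2 c2 :
  ratQ a1 b1 c1 + ratQ a2 b2 c2 =
  ratQ (a1 * (c2 + 1) + a2 * (c1 + 1)) (b1 * (c2 + 1) + b2 * (c1 + 1))
       (c1 * c2 + c1 + c2).
Proof.
  unfold ratQ; rewrite !plus_INR, !mult_INR, !plus_INR; change (INR 1) with 1.
  pose proof (pos_INR c1); pose proof (pos_INR c2).
  field; repeat split; nra.
Qed.

Lemma ratQ_mult a1 b1 c1 a2 b2 c2 :
  ratQ a1 b1 c1 * ratQ a2 b2 c2 =
  ratQ (a1 * a2 + b1 * b2) (a1 * b2 + b1 * a2) (c1 * c2 + c1 + c2).
Proof.
  unfold ratQ; rewrite !plus_INR, !mult_INR, ?plus_INR; change (INR 1) with 1.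
  pose proof (pos_INR c1); pose proof (pos_INR c2).
  field; repeat split; nra.
Qed.

Lemma ratQ_opp a b c : - ratQ a b c = ratQ b a c.
Proof. unfold ratQ; pose proof (pos_INR c); field; lra. Qed.

Lemma ratQ_inv c : ratQ 1 0 c = / (INR c + 1).
Proof. unfold ratQ; simpl; pose proof (pos_INR c); field; lra. Qed.

Lemma recursive_rat_NN_const a b c : recursive_rat_NN (fun _ _ => ratQ a b c).
Proof.
  exists (fun _ _ => a), (fun _ _ => b), (fun _ _ => c).
  repeat split; auto using recursive2_const.
Qed.

Lemma recursive_rat_NN_inv_fst : recursive_rat_NN (fun d _ => ratQ 1 0 d).
Proof.
  exists (fun _ _ => 1%nat), (fun _ _ => 0%nat), (fun d _ => d).
  repeat split; auto using recursive2_const, recursive2_fst.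
Qed.

Lemma recursive_rat_NN_plus f g : recursive_rat_NN f -> recursive_rat_NN g ->
  recursive_rat_NN (fun d n => f d n + g d n).
Proof.
  intros (a1 & b1 & c1 & Ha1 & Hb1 & Hc1 & E1) (a2 & b2 & c2 & Ha2 & Hb2 & Hc2 & E2).
  eexists _, _, _; split; [|split; [|split]].
  4: intros d n; rewrite E1, E2, ratQ_plus; reflexivity.
  all: repeat first [apply recursive2_add | apply recursive2_mul
                    | apply recursive2_const | assumption].
Qed.

Lemma recursive_rat_NN_mult f g : recursive_rat_NN f -> recursive_rat_NN g ->
  recursive_rat_NN (fun d n => f d n * g d n).
Proof.
  intros (a1 & b1 & c1 & Ha1 & Hb1 & Hc1 & E1) (a2 & b2 & c2 & Ha2 & Hb2 & Hc2 & E2).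
  eexists _, _, _; split; [|split; [|split]].
  4: intros d n; rewrite E1, E2, ratQ_mult; reflexivity.
  all: repeat first [apply recursive2_add | apply recursive2_mul
                    | apply recursive2_const | assumption].
Qed.

Lemma recursive_rat_NN_opp f : recursive_rat_NN f -> recursive_rat_NN (fun d n => - f d n).
Proof.
  intros (a & b & c & Ha & Hb & Hc & E); exists b, a, c.
  repeat split; auto; intros d n; rewrite E; apply ratQ_opp.
Qed.

Lemma recursive_rat_NN_comp f g1 g2 :
  recursive_rat_NN f -> recursive2 g1 -> recursive2 g2 ->
  recursive_rat_NN (fun d n => f (g1 d n) (g2 d n)).
Proof.
  intros (a & b & c & Ha & Hb & Hc & E) H1 H2.
  exists (fun d n => a (g1 d n) (g2 d n)), (fun d n => b (g1 d n) (g2 d n)),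
         (fun d n => c (g1 d n) (g2 d n)).
  repeat split; try (apply recursive2_comp; assumption); intros; apply E.
Qed.

Lemma recursive_rat_S_of_NN f U : recursive_rat_NN f ->
  (forall s, U s = f (code s) 0%nat) -> recursive_rat_S U.
Proof.
  intros (a & b & c & Ha & Hb & Hc & E) EU.
  exists (fun d => a d 0%nat), (fun d => b d 0%nat), (fun d => c d 0%nat).
  repeat split; try apply recursive1_of_recursive2; auto.
  intros s; rewrite EU; apply E.
Qed.

Lemma recursive_rat_NN_of_S U : recursive_rat_S U ->
  exists f, recursive_rat_NN f /\ forall s, U s = f (code s) 0%nat.
Proof.
  intros (a & b & c & Ha & Hb & Hc & E).
  exists (fun d _ => ratQ (a d) (b d) (c d)); split; [|exact E].
  exists (fun d _ => a d), (fun d _ => b d), (fun d _ => c d).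
  repeat split; auto using recursive2_of_recursive1.
Qed.

Lemma recursive_rat_S_computable U : recursive_rat_S U -> computable_S U.
Proof.
  intros (a & b & c & Ha & Hb & Hc & E); exists (fun s _ => U s); split.
  - exists (fun d _ => a d), (fun d _ => b d), (fun d _ => c d).
    repeat split; auto using recursive2_of_recursive1.
  - intros s n; rewrite Rminus_diag, Rabs_R0; apply Rinv_0_lt_compat, pow_lt; lra.
Qed.

Lemma recursive_rat_S_normalize a b c U : recursive_rat_S U ->
  recursive_rat_S (fun s => ratQ a b c * U s + (1 - ratQ a b c * U [])).
Proof.
  intros HU; destruct (recursive_rat_NN_of_S U HU) as (f & Hf & Ef).
  pose proof (recursive_rat_NN_comp f _ _ Hf (recursive2_const 0) (recursive2_const 0))
    as Hf00.
  apply (recursive_rat_S_of_NN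
           (fun d n => ratQ a b c * f d n + (ratQ 1 0 0 + - (ratQ a b c * f 0%nat 0%nat)))).
  - apply recursive_rat_NN_plus;
      [apply recursive_rat_NN_mult; [apply recursive_rat_NN_const | exact Hf]|].
    apply recursive_rat_NN_plus; [apply recursive_rat_NN_const|].
    apply recursive_rat_NN_opp, recursive_rat_NN_mult; [apply recursive_rat_NN_const|].
    exact Hf00.
  - intros s; rewrite !Ef, ratQ_inv; simpl; lra.
Qed.

Lemma code_snoc_lt s x : (code s < code (s ++ [x]))%nat.
Proof. induction s as [|b t IH]; simpl; [destruct x | destruct b]; lia. Qed.

Lemma pow2_cubic_bound c : (3 * ((c + 1) * (c + 2)) <= 2 ^ (c + 4))%nat.
Proof.
  induction c as [|[|c] IH]; [simpl; lia | simpl; lia|].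
  replace (S (S c) + 4)%nat with (S (S c + 4)) by lia.
  rewrite Nat.pow_succ_r'; nia.
Qed.

(* The error budget: approximating within [2^-(c+3)] at code [c] and adding
   the bonus [1/(c+1)] leaves room for the error at any later code. *)
Lemma approx_budget c c' : (c < c')%nat ->
  / 2 ^ (c' + 3) + / (INR c' + 1) + / 2 ^ (c + 3) <= / (INR c + 1).
Proof.
  intros Hcc'.
  pose proof (pos_INR c) as Hc.
  assert (Hc' : INR c + 1 <= INR c') by (rewrite <- S_INR; apply le_INR; lia).
  assert (HX : 0 < 2 ^ (c + 3)) by (apply pow_lt; lra).
  assert (Hpow : 2 ^ (c + 4) = 2 * 2 ^ (c + 3)).
  { replace (c + 4)%nat with (S (c + 3)) by lia; reflexivity. }
  assert (Hbound : 3 * ((INR c + 1) * (INR c + 2)) <= 2 * 2 ^ (c + 3)).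
  { rewrite <- Hpow; pose proof (le_INR _ _ (pow2_cubic_bound c)) as H.
    rewrite !mult_INR, !plus_INR, pow_INR in H; simpl (INR _) in H.
    replace (1 + 1) with 2 in H by ring; lra. }
  assert (/ 2 ^ (c' + 3) <= / (2 * 2 ^ (c + 3))).
  { rewrite <- Hpow; apply Rinv_le_contravar; [apply pow_lt; lra|].
    apply Rle_pow; [lra | lia]. }
  assert (/ (INR c' + 1) <= / (INR c + 2)) by (apply Rinv_le_contravar; lra).
  assert (3 / (2 * 2 ^ (c + 3)) <= / ((INR c + 1) * (INR c + 2))).
  { unfold Rdiv; rewrite <- (Rinv_inv 3), <- Rinv_mult.
    apply Rinv_le_contravar; [nra | lra]. }
  replace (/ (INR c + 1)) with (/ ((INR c + 1) * (INR c + 2)) + / (INR c + 2))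
    by (field; lra).
  replace (/ 2 ^ (c + 3)) with (2 / (2 * 2 ^ (c + 3))) by (field; lra).
  unfold Rdiv in *; lra.
Qed.

Lemma approx_error_lt_bonus c : / 2 ^ (c + 3) < / (INR c + 1).
Proof.
  pose proof (approx_budget c (S c) (Nat.lt_succ_diag_r c)).
  pose proof (pos_INR (S c)).
  assert (0 < / 2 ^ (S c + 3)) by (apply Rinv_0_lt_compat, pow_lt; lra).
  assert (0 < / (INR (S c) + 1)) by (apply Rinv_0_lt_compat; lra).
  lra.
Qed.

Lemma computable_S_rational_majorant M : computable_S M ->
  exists U, recursive_rat_S U /\ (forall s, M s < U s) /\
            (forall s x, Defs.Delta U s x <= Defs.Delta M s x).
Proof.
  intros (q & (A & B & C & HA & HB & HC & Eq) & Happ).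
  set (U := fun s => q s (code s + 3)%nat + ratQ 1 0 (code s)).
  assert (HUM : forall s, / (INR (code s) + 1) - / 2 ^ (code s + 3) <= U s - M s
                          <= / (INR (code s) + 1) + / 2 ^ (code s + 3)).
  { intros s; pose proof (Rabs_def2 _ _ (Happ s (code s + 3)%nat)).
    unfold U; rewrite ratQ_inv; lra. }
  exists U; split; [|split].
  - apply (recursive_rat_S_of_NN
             (fun d n => ratQ (A d (d + 3)%nat) (B d (d + 3)%nat) (C d (d + 3)%nat)
                         + ratQ 1 0 d)).
    + apply recursive_rat_NN_plus; [|exact recursive_rat_NN_inv_fst].
      apply (recursive_rat_NN_comp (fun d n => ratQ (A d n) (B d n) (C d n)));
        auto using recursive2_fst, recursive2_add, recursive2_const.
      exists A, B, C; repeat split; auto.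
    + intros s; unfold U; rewrite Eq; reflexivity.
  - intros s; pose proof (HUM s); pose proof (approx_error_lt_bonus (code s)); lra.
  - intros s x; unfold Defs.Delta.
    pose proof (HUM s); pose proof (HUM (s ++ [x])).
    pose proof (approx_budget _ _ (code_snoc_lt s x)); lra.
Qed.

Lemma Ex_le r f g : 0 <= r <= 1 -> (forall x, f x <= g x) -> Ex r f <= Ex r g.
Proof.
  intros Hr Hfg; unfold Ex.
  pose proof (Hfg true); pose proof (Hfg false); nra.
Qed.

Lemma supermartingale_Delta_le phi M U : forecasting_system phi ->
  supermartingale phi M -> (forall s x, Defs.Delta U s x <= Defs.Delta M s x) ->
  supermartingale phi U.
Proof.
  intros Hphi HM HUM s r Hr.
  destruct (Hphi s) as (H0 & H1 & H2); unfold in_interval in Hr.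
  apply Rle_trans with (Ex r (Defs.Delta M s)); [apply Ex_le; auto; lra|].
  exact (HM s r Hr).
Qed.

Lemma supermartingale_affine phi U K c : 0 <= K ->
  supermartingale phi U -> supermartingale phi (fun s => K * U s + c).
Proof.
  intros HK HU s r Hr.
  replace (Ex r (Defs.Delta (fun s => K * U s + c) s)) with (K * Ex r (Defs.Delta U s))
    by (unfold Ex, Defs.Delta; ring).
  pose proof (HU s r Hr); nra.
Qed.

Lemma real_growth_function_scal a b c tau : 0 < ratQ a b c <= 1 ->
  real_growth_function tau -> real_growth_function (fun n => ratQ a b c * tau n).
Proof.
  set (K := ratQ a b c); intros HK ((qt & Hqt & Happ) & Hpos & Hmono & Hunb).
  split; [|split; [|split]].
  - exists (fun d n => K * qt d n); split.
    + apply recursive_rat_NN_mult; [apply recursive_rat_NN_const | exact Hqt].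
    + intros d n.
      replace (K * tau d - K * qt d n) with (K * (tau d - qt d n)) by ring.
      rewrite Rabs_mult, (Rabs_pos_eq K) by lra.
      pose proof (Happ d n); pose proof (Rabs_pos (tau d - qt d n)); nra.
  - intros n; pose proof (Hpos n); nra.
  - intros n m Hnm; pose proof (Hmono n m Hnm); nra.
  - intros Bd; destruct (Hunb (Bd / K)) as [n Hn]; exists n.
    apply (Rmult_lt_compat_l K) in Hn; [|lra].
    replace (K * (Bd / K)) with Bd in Hn by (field; lra); exact Hn.
Qed.

Lemma limsup_ge0_le F G tau omega : (forall s, F s <= G s) ->
  limsup_ge0 F tau omega -> limsup_ge0 G tau omega.
Proof.
  intros HFG HF; eapply Rbar_le_trans; [exact HF|].
  apply LimSup_le; exists 0%nat; intros n _; pose proof (HFG (prefix omega n)); lra.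
Qed.

Lemma limsup_ge0_scal K F tau omega : 0 < K -> limsup_ge0 F tau omega ->
  limsup_ge0 (fun s => K * F s) (fun n => K * tau n) omega.
Proof.
  unfold limsup_ge0; intros HK HF.
  destruct (ex_LimSup_seq (fun n => F (prefix omega n) - tau n)) as [l Hl].
  rewrite (is_LimSup_seq_unique _ _ Hl) in HF.
  eapply Rbar_le_trans;
    [|apply (LimSup_le (fun n => K * (F (prefix omega n) - tau n)));
      exists 0%nat; intros n _; lra].
  rewrite (is_LimSup_seq_unique _ _ (is_LimSup_seq_scal_pos K _ l HK Hl)).
  destruct l as [l| |]; simpl in *; [nra | |contradiction].
  destruct (Rle_dec 0 K) as [HK'|]; [|lra].
  destruct (Rle_lt_or_eq_dec 0 K HK'); [exact I | lra].
Qed.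

Theorem proposition6 (phi : situation -> R * R) (omega : nat -> bool) :
  forecasting_system phi ->
  (S_random phi omega <->
   ~ exists (M : situation -> R) (tau : nat -> R),
       computable_S M /\ (forall s, 0 <= M s) /\ supermartingale phi M /\
       real_growth_function tau /\ limsup_ge0 M tau omega).
Proof.
  intros Hphi; split.
  - intros Hrand (M & tau & HM & HM0 & HMsup & Htau & Hlim); apply Hrand.
    destruct (computable_S_rational_majorant M HM) as (U & HU & HMU & HdU).
    destruct (INR_unbounded (U [])) as [k Hk].
    set (K := ratQ 1 0 k).
    assert (HK : (0 < K <= 1) /\ K * U [] <= 1).
    { pose proof (pos_INR k); unfold K; rewrite ratQ_inv; split; [split|].
      - apply Rinv_0_lt_compat; lra.
      - rewrite <- Rinv_1; apply Rinv_le_contravar; lra.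
      - apply (Rmult_le_reg_l (INR k + 1)); [lra|]; field_simplify; lra. }
    destruct HK as [HK HKU].
    exists (fun s => K * U s + (1 - K * U [])), (fun n => K * tau n).
    split; [|split; [|split; [|split]]].
    + intros s; pose proof (HMU s); pose proof (HM0 s); nra.
    + apply recursive_rat_S_normalize, HU.
    + split; [|split].
      * apply supermartingale_affine; [lra|].
        apply (supermartingale_Delta_le phi M); assumption.
      * intros s; pose proof (HMU s); pose proof (HM0 s); nra.
      * ring.
    + apply real_growth_function_scal; [exact HK | exact Htau].
    + apply (limsup_ge0_le (fun s => K * M s)); [|apply limsup_ge0_scal; [lra | exact Hlim]].
      intros s; pose proof (HMU s); nra.
  - intros Hno (T & tau & _ & HT & (HTsup & HT0 & _) & Htau & Hlim); apply Hno.
    exists T, tau; split; [|split; [|split; [|split]]]; auto using recursive_rat_S_computable.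
Qed.
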